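(* Let $m>0$. For every fixed $k\geq0$, the functions $$\widetilde S^{\mathrm o}_k(y)=\frac{\sinh\big(k\arcsin\frac{y}{m+1}\big)}{\cos\big(\arcsin\frac{y}{m+1}\big)},\qquad\widetilde S^{\mathrm e}_k(y)=\frac{\cosh\big(k\arcsin\frac{y}{m+1}\big)}{\cos\big(\arcsin\frac{y}{m+1}\big)}$$ have Taylor expansions in the variable $y\in[-1,1]$ (about $y=0$) with nonnegative coefficients. *)

From Stdlib Require Import Reals.
From Coquelicot Require Import Coquelicot.
Open Scope R_scope.

Definition S_odd (m k y : R) : R :=
  sinh (k * asin (y / (m + 1))) / cos (asin (y / (m + 1))).

Definition S_even (m k y : R) : R :=
  cosh (k * asin (y / (m + 1))) / cos (asin (y / (m + 1))).

Definition taylor_nonneg_on_unit (f : R -> R) : Prop :=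
  exists a : nat -> R,
    (forall n, a n = Derive_n f n 0 / INR (Factorial.fact n)) /\
    (forall n, 0 <= a n) /\
    (forall y, -1 <= y <= 1 -> is_pseries a y (f y)).

From Stdlib Require Import Reals Lra.
From Coquelicot Require Import Coquelicot.
Open Scope R_scope.

(* Let T be sinh(k.) or cosh(k.), so that T'' = k^2 T, and put
   P(x) = T(asin x) / cos(asin x), i.e. P(sin t) cos t = T(t).  Then P solves
   (1 - x^2) P'' - 3 x P' - (1 + k^2) P = 0, whose power series solutions obey
   c_(n+2) = ((n+1)^2 + k^2) / ((n+2)(n+1)) c_n.  Starting from c_0 = T(0) >= 0
   and c_1 = T'(0) >= 0 every coefficient is nonnegative, and the product of the
   ratios converges, so the c_n are bounded and the radius is at least 1.
   Uniqueness for T'' = k^2 T identifies the series solution with P on (-1,1).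
   Finally S(y) = P(y/(m+1)) has coefficients c_n/(m+1)^n >= 0 and radius at
   least m+1 > 1, which covers [-1,1]. *)

Lemma bounded_coef_CV_radius (a : nat -> R) (M : R) :
  (forall n, Rabs (a n) <= M) -> Rbar_le 1 (CV_radius a).
Proof.
  intros Ha. apply (proj1 (CV_radius_bounded a)).
  exists M. intros n. rewrite pow1, Rmult_1_r. apply Ha.
Qed.

Lemma is_derive_Rmult (f g : R -> R) x df dg :
  is_derive f x df -> is_derive g x dg ->
  is_derive (fun t => f t * g t) x (df * g x + f x * dg).
Proof. intros Hf Hg. exact (is_derive_mult f g x df dg Hf Hg Rmult_comm). Qed.

Lemma is_derive_Rminus (f g : R -> R) x df dg :
  is_derive f x df -> is_derive g x dg ->
  is_derive (fun t => f t - g t) x (df - dg).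
Proof. intros Hf Hg. exact (is_derive_minus f g x df dg Hf Hg). Qed.

Lemma is_derive_comp_sin (f : R -> R) t df :
  is_derive f (sin t) df -> is_derive (fun u => f (sin u)) t (cos t * df).
Proof. intros H. exact (is_derive_comp f sin t df (cos t) H (is_derive_sin t)). Qed.

Lemma is_derive_exp_scal k t : is_derive (fun u => exp (k * u)) t (k * exp (k * t)).
Proof. auto_derive; [easy | ring]. Qed.

Lemma is_derive_eq (f : R -> R) x (l l' : R) :
  is_derive f x l -> l = l' -> is_derive f x l'.
Proof. intros H <-; exact H. Qed.

Lemma derive0_const_on (f : R -> R) A :
  (forall t, -A < t < A -> is_derive f t 0) ->
  forall t, -A < t < A -> f t = f 0.
Proof.
  intros Hf t Ht.
  assert (Hin : forall x, Rmin 0 t <= x <= Rmax 0 t -> -A < x < A).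
  { intros x Hx. unfold Rmin, Rmax in Hx. destruct (Rle_dec 0 t); lra. }
  destruct (MVT_gen f 0 t (fun _ => 0)) as [c [_ Hc]].
  - intros x Hx. apply Hf, Hin. lra.
  - intros x Hx. apply continuity_pt_filterlim, (ex_derive_continuous f x).
    exists 0. apply Hf, Hin, Hx.
  - lra.
Qed.

(* Both steps kill a first-order factor: (g' - k g) e^(kt) and then g e^(-kt)
   have zero derivative. *)
Lemma ode_hyperbolic_unique (g g1 : R -> R) (k A : R) :
  (forall t, -A < t < A -> is_derive g t (g1 t)) ->
  (forall t, -A < t < A -> is_derive g1 t (k ^ 2 * g t)) ->
  g 0 = 0 -> g1 0 = 0 -> forall t, -A < t < A -> g t = 0.
Proof.
  intros Hg Hg1 g0 g10.
  assert (first_order : forall t, -A < t < A -> g1 t = k * g t).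
  { intros t Ht.
    assert (E : (g1 t - k * g t) * exp (k * t) = 0).
    { rewrite (derive0_const_on (fun u => (g1 u - k * g u) * exp (k * u)) A); trivial.
      - rewrite g0, g10. ring.
      - intros u Hu. eapply is_derive_eq.
        + apply is_derive_Rmult; [|apply is_derive_exp_scal].
          apply is_derive_Rminus; [apply Hg1, Hu|].
          apply is_derive_scal, Hg, Hu.
        + cbv beta. ring. }
    pose proof (exp_pos (k * t)). apply Rmult_integral in E. destruct E; lra. }
  intros t Ht.
  assert (E : g t * exp (- k * t) = 0).
  { rewrite (derive0_const_on (fun u => g u * exp (- k * u)) A); trivial.
    - rewrite g0. ring.
    - intros u Hu. eapply is_derive_eq.
      + apply is_derive_Rmult; [apply Hg, Hu | apply is_derive_exp_scal].
      + rewrite (first_order u Hu). ring. }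
  pose proof (exp_pos (- k * t)). apply Rmult_integral in E. destruct E; lra.
Qed.

Lemma Rabs_sin_lt_1 t : - (PI / 2) < t < PI / 2 -> Rabs (sin t) < 1.
Proof.
  intros Ht. pose proof (cos_gt_0 t (proj1 Ht) (proj2 Ht)).
  pose proof (sin2_cos2 t). unfold Rsqr in *. apply Rabs_def1; nra.
Qed.

Lemma exp_le_exp x y : x <= y -> exp x <= exp y.
Proof.
  intros [Hlt | <-]; [left; apply exp_increasing, Hlt | right; reflexivity].
Qed.

Definition coef_ratio (k : R) (n : nat) : R :=
  ((INR n + 1) ^ 2 + k ^ 2) / ((INR n + 2) * (INR n + 1)).

Section SeriesSolution.

Variables k d0 d1 : R.

Fixpoint ode_coef (n : nat) : R :=
  match n with
  | O => d0
  | S O => d1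
  | S (S p) => coef_ratio k p * ode_coef p
  end.

Lemma coef_ratio_pos n : 0 < coef_ratio k n.
Proof.
  unfold coef_ratio. pose proof (pos_INR n).
  apply Rdiv_lt_0_compat; nra.
Qed.

(* A majorant of the partial products of the ratios: it lies in [1, e^(k^2)]
   and G(n+2)/G(n) = exp(4k^2/((n+2)(n+4))) >= 1 + 4k^2/((n+2)(n+4)) >= rho_n. *)
Definition coef_majorant (n : nat) : R := exp (k ^ 2 - 2 * k ^ 2 / (INR n + 2)).

Lemma coef_ratio_le_majorant_ratio n :
  coef_ratio k n * coef_majorant n <= coef_majorant (S (S n)).
Proof.
  unfold coef_majorant. rewrite !S_INR. set (t := INR n).
  assert (Ht : 0 <= t) by apply pos_INR.
  set (e := 4 * k ^ 2 / ((t + 2) * (t + 4))).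
  assert (He : 0 <= e).
  { apply Rmult_le_pos; [nra | apply Rlt_le, Rinv_0_lt_compat; nra]. }
  replace (k ^ 2 - 2 * k ^ 2 / (t + 1 + 1 + 2))
    with ((k ^ 2 - 2 * k ^ 2 / (t + 2)) + e) by (unfold e; field; lra).
  rewrite exp_plus, (Rmult_comm (exp _)).
  apply Rmult_le_compat_r; [apply Rlt_le, exp_pos|].
  pose proof (exp_ineq1_le e).
  assert (gap : 1 + e - coef_ratio k n
                = ((t + 1) * (t + 4) + 3 * t * k ^ 2) / ((t + 1) * (t + 2) * (t + 4))).
  { unfold e, coef_ratio. fold t. field. lra. }
  assert (0 <= ((t + 1) * (t + 4) + 3 * t * k ^ 2) / ((t + 1) * (t + 2) * (t + 4))).
  { apply Rmult_le_pos; [nra | apply Rlt_le, Rinv_0_lt_compat; nra]. }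
  lra.
Qed.

Lemma coef_majorant_bounds n : 1 <= coef_majorant n <= exp (k ^ 2).
Proof.
  unfold coef_majorant. pose proof (pos_INR n).
  set (e := 2 * k ^ 2 / (INR n + 2)).
  assert (He : 0 <= e <= k ^ 2).
  { split.
    - apply Rmult_le_pos; [nra | apply Rlt_le, Rinv_0_lt_compat; lra].
    - apply Rmult_le_reg_r with (INR n + 2); [lra|]. unfold e. field_simplify; nra. }
  split.
  - rewrite <- exp_0. apply exp_le_exp. lra.
  - apply exp_le_exp. lra.
Qed.

Hypotheses (d0_ge0 : 0 <= d0) (d1_ge0 : 0 <= d1).

Lemma ode_coef_bounds n : 0 <= ode_coef n <= (d0 + d1) * exp (k ^ 2).
Proof.
  assert (majorized : forall n, 0 <= ode_coef n <= (d0 + d1) * coef_majorant n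
                                /\ 0 <= ode_coef (S n) <= (d0 + d1) * coef_majorant (S n)).
  { clear n; induction n as [|n [IHn IHSn]].
    - pose proof (coef_majorant_bounds 0). pose proof (coef_majorant_bounds 1).
      simpl. split; split; nra.
    - split; [exact IHSn|]. cbn [ode_coef].
      pose proof (coef_ratio_pos n). pose proof (coef_ratio_le_majorant_ratio n).
      pose proof (coef_majorant_bounds n).
      split; [nra|].
      apply Rle_trans with (coef_ratio k n * ((d0 + d1) * coef_majorant n)); [|nra].
      apply Rmult_le_compat_l; lra. }
  destruct (majorized n) as [Hn _]. pose proof (coef_majorant_bounds n). nra.
Qed.

Lemma ode_coef_CV_radius_inside x :
  Rabs x < 1 -> Rbar_lt (Rabs x) (CV_radius ode_coef).
Proof.
  intros Hx.
  assert (R1 : Rbar_le 1 (CV_radius ode_coef)).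
  { apply bounded_coef_CV_radius with ((d0 + d1) * exp (k ^ 2)). intros n.
    destruct (ode_coef_bounds n). rewrite Rabs_pos_eq; lra. }
  destruct (CV_radius ode_coef); simpl in *; lra.
Qed.

Lemma ode_coef_PS_equation n :
  PS_plus (PS_plus (PS_incr_1 (PS_incr_1 (PS_derive (PS_derive ode_coef))))
                   (PS_scal 3 (PS_incr_1 (PS_derive ode_coef))))
          (PS_scal (1 + k ^ 2) ode_coef) n
  = PS_derive (PS_derive ode_coef) n.
Proof.
  unfold PS_plus, PS_scal, PS_incr_1, PS_derive. cbn -[INR pow].
  destruct n as [|[|n]]; cbn [ode_coef]; unfold coef_ratio; rewrite ?S_INR; simpl INR.
  - field.
  - field.
  - pose proof (pos_INR n). field. lra.
Qed.

Let P := PSeries ode_coef.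
Let P1 := PSeries (PS_derive ode_coef).
Let P2 := PSeries (PS_derive (PS_derive ode_coef)).

Lemma PSeries_ode_coef_ode x :
  Rabs x < 1 -> P2 x = x ^ 2 * P2 x + 3 * x * P1 x + (1 + k ^ 2) * P x.
Proof.
  intros Hx.
  pose proof (ode_coef_CV_radius_inside x Hx) as R0.
  assert (R1 : Rbar_lt (Rabs x) (CV_radius (PS_derive ode_coef)))
    by (rewrite CV_radius_derive; exact R0).
  assert (R2 : Rbar_lt (Rabs x) (CV_radius (PS_derive (PS_derive ode_coef))))
    by (rewrite !CV_radius_derive; exact R0).
  pose proof (PSeries_correct _ _ (CV_radius_inside _ _ R0)) as S0.
  pose proof (PSeries_correct _ _ (CV_radius_inside _ _ R1)) as S1.
  pose proof (PSeries_correct _ _ (CV_radius_inside _ _ R2)) as S2.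
  pose proof (is_pseries_incr_1 _ _ _ (is_pseries_incr_1 _ _ _ S2)) as T2.
  pose proof (is_pseries_scal 3 _ _ _ (Rmult_comm _ _) (is_pseries_incr_1 _ _ _ S1)) as T1.
  pose proof (is_pseries_scal (1 + k ^ 2) _ _ _ (Rmult_comm _ _) S0) as T0.
  pose proof (is_pseries_plus _ _ _ _ _ (is_pseries_plus _ _ _ _ _ T2 T1) T0) as Sum.
  apply (is_pseries_ext _ _ _ _ ode_coef_PS_equation), is_pseries_unique in Sum.
  assert (E : P2 x = x * (x * P2 x) + 3 * (x * P1 x) + (1 + k ^ 2) * P x)
    by exact Sum.
  rewrite E at 1. ring.
Qed.

Lemma is_derive_PSeries_ode_coef s : Rabs s < 1 -> is_derive P s (P1 s).
Proof. intros. apply is_derive_PSeries, ode_coef_CV_radius_inside. easy. Qed.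

Lemma is_derive_PSeries_ode_coef_derive s : Rabs s < 1 -> is_derive P1 s (P2 s).
Proof.
  intros. apply is_derive_PSeries.
  rewrite CV_radius_derive. apply ode_coef_CV_radius_inside. easy.
Qed.

Variables T T1 : R -> R.
Hypotheses (T_deriv : forall t, is_derive T t (T1 t))
           (T1_deriv : forall t, is_derive T1 t (k ^ 2 * T t))
           (T_0 : T 0 = d0) (T1_0 : T1 0 = d1).

(* g(t) = P(sin t) cos t - T(t) solves g'' = k^2 g: this is where the ODE for P
   (multiplied by cos t, with sin^2 + cos^2 = 1) is used. *)
Lemma PSeries_ode_coef_sin_mul_cos t :
  - (PI / 2) < t < PI / 2 -> P (sin t) * cos t = T t.
Proof.
  intros Ht. apply Rminus_diag_uniq.
  apply (ode_hyperbolic_unique (fun u => P (sin u) * cos u - T u)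
     (fun u => P1 (sin u) * (cos u * cos u) - P (sin u) * sin u - T1 u) k (PI / 2));
    trivial.
  - intros u Hu. pose proof (Rabs_sin_lt_1 u Hu) as Hs.
    eapply is_derive_eq.
    + apply is_derive_Rminus; [|apply T_deriv].
      apply is_derive_Rmult; [|apply is_derive_cos].
      apply is_derive_comp_sin, is_derive_PSeries_ode_coef, Hs.
    + cbv beta. ring.
  - intros u Hu. pose proof (Rabs_sin_lt_1 u Hu) as Hs.
    eapply is_derive_eq.
    + apply is_derive_Rminus; [|apply T1_deriv].
      apply is_derive_Rminus.
      * apply is_derive_Rmult.
        { apply is_derive_comp_sin, is_derive_PSeries_ode_coef_derive, Hs. }
        apply (is_derive_Rmult cos cos); apply is_derive_cos.
      * apply is_derive_Rmult; [|apply is_derive_sin].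
        apply is_derive_comp_sin, is_derive_PSeries_ode_coef, Hs.
    + cbv beta. pose proof (PSeries_ode_coef_ode (sin u) Hs) as ode.
      pose proof (sin2_cos2 u) as sc. unfold Rsqr in sc.
      set (s := sin u) in *. set (c := cos u) in *.
      transitivity (k ^ 2 * (P s * c - T u)
                    + c * ((s * s + c * c - 1) * P2 s)
                    + c * (P2 s - (s ^ 2 * P2 s + 3 * s * P1 s + (1 + k ^ 2) * P s)));
        [ring|].
      rewrite sc, <- ode. ring.
  - rewrite sin_0, cos_0. unfold P. rewrite PSeries_0, T_0. simpl. ring.
  - rewrite sin_0, cos_0. unfold P, P1. rewrite !PSeries_0, T1_0.
    unfold PS_derive. simpl. ring.
Qed.

Lemma taylor_nonneg_on_unit_rescaled (m : R) (f : R -> R) :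
  0 < m ->
  (forall y, f y = T (asin (y / (m + 1))) / cos (asin (y / (m + 1)))) ->
  taylor_nonneg_on_unit f.
Proof.
  intros Hm Hf.
  assert (Hm1 : 0 < m + 1) by lra.
  set (a := fun n => ode_coef n / (m + 1) ^ n).
  assert (a_bounds : forall n, 0 <= a n <= (d0 + d1) * exp (k ^ 2)).
  { intros n. unfold a. pose proof (ode_coef_bounds n).
    assert (1 <= (m + 1) ^ n) by (apply pow_R1_Rle; lra).
    split.
    - apply Rmult_le_pos; [lra | apply Rlt_le, Rinv_0_lt_compat; lra].
    - apply Rle_trans with (ode_coef n); [|lra].
      apply Rmult_le_reg_r with ((m + 1) ^ n); [lra|].
      field_simplify; nra. }
  assert (series_eq : forall y, Rabs y < m + 1 -> is_pseries a y (f y)).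
  { intros y Hy. set (x := y / (m + 1)).
    assert (Hx : Rabs x < 1).
    { unfold x. rewrite Rabs_div, (Rabs_pos_eq (m + 1)) by lra.
      apply Rmult_lt_reg_r with (m + 1); [lra|]. field_simplify; lra. }
    assert (Hx' : -1 < x < 1) by (destruct (Rabs_def2 _ _ Hx); lra).
    pose proof (asin_bound_lt x Hx') as Hb.
    pose proof (cos_gt_0 _ (proj1 Hb) (proj2 Hb)).
    pose proof (PSeries_ode_coef_sin_mul_cos (asin x) Hb) as E.
    rewrite sin_asin in E by lra.
    replace (f y) with (P x) by (rewrite Hf; fold x; rewrite <- E; field; lra).
    eapply is_series_ext; [|apply (PSeries_correct _ _ (CV_radius_inside _ _
                                   (ode_coef_CV_radius_inside x Hx)))].
    intros n. rewrite !pow_n_pow.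
    change ((y / (m + 1)) ^ n * ode_coef n = y ^ n * (ode_coef n / (m + 1) ^ n)).
    unfold Rdiv. rewrite Rpow_mult_distr, pow_inv. ring. }
  exists a. split; [|split].
  - intros n. rewrite (Derive_n_ext_loc f (PSeries a)).
    + rewrite Derive_n_coef.
      * field. apply INR_fact_neq_0.
      * apply Rbar_lt_le_trans with 1; [simpl; lra|].
        apply bounded_coef_CV_radius with ((d0 + d1) * exp (k ^ 2)). intros n'.
        destruct (a_bounds n'). rewrite Rabs_pos_eq; lra.
    + exists (mkposreal 1 Rlt_0_1). intros y Hy.
      change (Rabs (y - 0) < 1) in Hy. rewrite Rminus_0_r in Hy.
      symmetry. apply is_pseries_unique, series_eq. lra.
  - intros n. apply a_bounds.
  - intros y Hy. apply series_eq, Rabs_def1; lra.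
Qed.

End SeriesSolution.

Theorem mainTheorem7 (m k : R) (hm : 0 < m) (hk : 0 <= k) :
  taylor_nonneg_on_unit (S_odd m k) /\ taylor_nonneg_on_unit (S_even m k).
Proof.
  assert (sinh_deriv : forall t, is_derive (fun u => sinh (k * u)) t (k * cosh (k * t))).
  { intros t. unfold sinh, cosh. auto_derive; [easy | field]. }
  assert (cosh_deriv : forall t, is_derive (fun u => cosh (k * u)) t (k * sinh (k * t))).
  { intros t. unfold sinh, cosh. auto_derive; [easy | field]. }
  assert (sinh_0 : sinh (k * 0) = 0)
    by (unfold sinh; rewrite Rmult_0_r, Ropp_0, exp_0; field).
  assert (cosh_0 : cosh (k * 0) = 1)
    by (unfold cosh; rewrite Rmult_0_r, Ropp_0, exp_0; field).
  split.
  - apply (taylor_nonneg_on_unit_rescaled k 0 k (Rle_refl 0) hk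
             (fun t => sinh (k * t)) (fun t => k * cosh (k * t)) sinh_deriv)
      with m; trivial.
    + intros t. eapply is_derive_eq; [apply is_derive_scal, cosh_deriv | ring].
    + cbv beta. rewrite cosh_0. ring.
  - apply (taylor_nonneg_on_unit_rescaled k 1 0 Rle_0_1 (Rle_refl 0)
             (fun t => cosh (k * t)) (fun t => k * sinh (k * t)) cosh_deriv)
      with m; trivial.
    + intros t. eapply is_derive_eq; [apply is_derive_scal, sinh_deriv | ring].
    + cbv beta. rewrite sinh_0. ring.
Qed.
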